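(* Assume $\ell=d$ and that $B_1,B_2,R_1,R_2$ (and $B_1+\bar B_1,B_2+\bar B_2,R_1+\bar R_1,R_2+\bar R_2$) are invertible. Let $P^o\in\mathbb R^{d\times d}$ solve $$P^o=\gamma(A^\top P^o+2Q)\big(A+(B_1\Gamma_1+B_2\Gamma_2)P^o\big),\qquad \Gamma_1=-\tfrac12R_1^{-1}B_1^\top,\ \Gamma_2=\tfrac12R_2^{-1}B_2^\top,$$ and set $P^c=\frac12A^\top P^o+Q$. If $A^\top P^o=(P^o)^\top A$ and the symmetric matrices $P^c$ and $(P^c)^{-1}+\gamma(B_1R_1^{-1}B_1^\top-B_2R_2^{-1}B_2^\top)$ are invertible, then $P^c\in\mathcal S^d$ is a solution of $0=\mathcal M(P^c)-\mathcal L(P^c)\mathcal N(P^c)^{-1}\mathcal L(P^c)^\top$.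
   Context: $\mathcal S^d$: symmetric $d\times d$ matrices. Fix $d\ge1$, $\gamma\in(0,1)$, $A,\bar A\in\mathbb R^{d\times d}$, $B_1,\bar B_1,B_2,\bar B_2\in\mathbb R^{d\times d}$, $Q\in\mathcal S^d$, symmetric $R_1,\bar R_1,R_2,\bar R_2\in\mathbb R^{d\times d}$. For $P\in\mathcal S^d$: $\mathcal M(P)=\gamma A^\top PA-P+Q$, $\mathcal L_i(P)=\gamma A^\top PB_i$, $\mathcal L_{12}(P)=\gamma B_1^\top PB_2$, $\mathcal N_1(P)=\gamma B_1^\top PB_1+R_1$, $\mathcal N_2(P)=\gamma B_2^\top PB_2-R_2$, $\mathcal L(P)=[\mathcal L_1(P),\mathcal L_2(P)]$, $\mathcal N(P)=\begin{bmatrix}\mathcal N_1(P)&\mathcal L_{12}(P)\\\mathcal L_{12}(P)^\top&\mathcal N_2(P)\end{bmatrix}$. *)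

From HB Require Import structures.
From mathcomp Require Import all_boot all_order all_algebra.
Set Implicit Arguments. Unset Strict Implicit. Unset Printing Implicit Defensive.
Import Order.TTheory GRing.Theory Num.Theory.
Local Open Scope ring_scope.

Section Ops.
Variables (R : realFieldType) (d : nat) (gamma : R).
Variables (A B1 B2 Q R1 R2 : 'M[R]_d).

Definition symmx (P : 'M[R]_d) : Prop := P^T = P.

Definition Mop (P : 'M[R]_d) : 'M[R]_d := gamma *: (A^T *m P *m A) - P + Q.
Definition L1op (P : 'M[R]_d) : 'M[R]_d := gamma *: (A^T *m P *m B1).
Definition L2op (P : 'M[R]_d) : 'M[R]_d := gamma *: (A^T *m P *m B2).
Definition L12op (P : 'M[R]_d) : 'M[R]_d := gamma *: (B1^T *m P *m B2).
Definition N1op (P : 'M[R]_d) : 'M[R]_d := gamma *: (B1^T *m P *m B1) + R1.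
Definition N2op (P : 'M[R]_d) : 'M[R]_d := gamma *: (B2^T *m P *m B2) - R2.
Definition Lop (P : 'M[R]_d) : 'M[R]_(d, d + d) := row_mx (L1op P) (L2op P).
Definition Nop (P : 'M[R]_d) : 'M[R]_(d + d) :=
  block_mx (N1op P) (L12op P) (L12op P)^T (N2op P).
End Ops.

(** With [B = [B1 B2]] and [R~ = diag(R1, -R2)] one has [N(P) = R~ + γ B^T P B]
    and [L(P) = γ A^T P B], so by the Woodbury identity
    [L(P) N(P)^-1 L(P)^T = γ A^T (P - K^-1) A] where [K = P^-1 + γ B R~^-1 B^T].
    Hence the Riccati residual at [Pc] is [γ A^T K^-1 A - Pc + Q].  The fixed-point
    equation for [Po] says exactly [K Po = 2 γ A], so [γ A^T K^-1 A = A^T Po / 2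
    = Pc - Q] and the residual vanishes. *)
From HB Require Import structures.
From mathcomp Require Import all_boot all_order all_algebra.
Set Implicit Arguments. Unset Strict Implicit.
Import Order.TTheory GRing.Theory Num.Theory.
Local Open Scope ring_scope.

Section Resolvent.
Variables (R : comUnitRingType) (d : nat) (g : R) (P S : 'M[R]_d).
Hypotheses (uP : P \in unitmx) (uK : invmx P + g *: S \in unitmx).

Let Ki := invmx (invmx P + g *: S).

Lemma resolventEl : Ki = P - g *: (P *m S *m Ki).
Proof.
apply/eqP; rewrite eq_sym subr_eq; apply/eqP.
have PE : P = P *m (invmx P + g *: S) *m Ki by rewrite -mulmxA mulmxV ?mulmx1.
by rewrite {1}PE mulmxDr mulmxV // mulmxDl mul1mx -scalemxAr -scalemxAl.
Qed.

Lemma resolventEr : Ki = P - g *: (Ki *m S *m P).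
Proof.
apply/eqP; rewrite eq_sym subr_eq; apply/eqP.
have PE : P = Ki *m ((invmx P + g *: S) *m P) by rewrite mulmxA mulVmx ?mul1mx.
by rewrite {1}PE mulmxDl mulVmx // mulmxDr mulmx1 -scalemxAl -scalemxAr mulmxA.
Qed.

End Resolvent.

Section Woodbury.
Variables (R : comUnitRingType) (d n : nat) (g : R) (P : 'M[R]_d).
Variables (B : 'M[R]_(d, n)) (Rd Rdi : 'M[R]_n).
Hypotheses (hR : Rd *m Rdi = 1%:M) (uP : P \in unitmx).

Let S := B *m Rdi *m B^T.
Let Ki := invmx (invmx P + g *: S).
Hypothesis uK : invmx P + g *: S \in unitmx.

Definition woodbury_inv : 'M[R]_n := Rdi - g *: (Rdi *m B^T *m Ki *m B *m Rdi).

Let KiEl : Ki = P - g *: (P *m S *m Ki) := resolventEl uP uK.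
Let KiEr : Ki = P - g *: (Ki *m S *m P) := resolventEr uP uK.

Lemma mulmx_woodbury_inv : (Rd + g *: (B^T *m P *m B)) *m woodbury_inv = 1%:M.
Proof.
have RdK : Rd *m (Rdi *m B^T *m Ki *m B *m Rdi) = B^T *m Ki *m B *m Rdi.
  by rewrite !mulmxA hR mul1mx.
have PSK : B^T *m P *m B *m (Rdi *m B^T *m Ki *m B *m Rdi)
         = B^T *m (P *m S *m Ki) *m B *m Rdi by rewrite !mulmxA.
have KE : B^T *m Ki *m B *m Rdi
        = B^T *m P *m B *m Rdi - g *: (B^T *m (P *m S *m Ki) *m B *m Rdi).
  by rewrite {1}KiEl !(mulmxBr, mulmxBl) -!(scalemxAr, scalemxAl).
rewrite mulmxDl !mulmxBr hR -scalemxAr RdK -!scalemxAl -!scalemxAr PSK KE.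
by rewrite scalerBr subrK.
Qed.

Lemma woodbury_quadratic :
  g *: (P *m (B *m woodbury_inv *m B^T) *m P) = P - Ki.
Proof.
have BNB : B *m woodbury_inv *m B^T = S - g *: (S *m Ki *m S).
  by rewrite mulmxBr mulmxBl -scalemxAr -scalemxAl !mulmxA.
have PSK : P *m S *m Ki = P *m (S - g *: (S *m Ki *m S)) *m P.
  by rewrite {1}KiEr !(mulmxBr, mulmxBl) -!(scalemxAr, scalemxAl) !mulmxA.
by rewrite BNB -PSK {2}KiEl opprB addrC subrK.
Qed.

End Woodbury.

Section RiccatiResidual.
Variables (R : realFieldType) (d : nat) (g : R) (A B1 B2 Q R1 R2 P : 'M[R]_d).
Hypotheses (sP : symmx P) (uR1 : R1 \in unitmx) (uR2 : R2 \in unitmx).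

Let B := row_mx B1 B2.
Let Rd := block_mx R1 0 0 (- R2).
Let Rdi := block_mx (invmx R1) 0 0 (- invmx R2).
Let S := B1 *m invmx R1 *m B1^T - B2 *m invmx R2 *m B2^T.

Lemma mulmx_diag_inv : Rd *m Rdi = 1%:M.
Proof.
rewrite mulmx_block !mul0mx !mulmx0 !addr0 !add0r mulNmx mulmxN opprK.
by rewrite !mulmxV // (scalar_mx_block d d).
Qed.

Lemma row_diag_inv_tr : B *m Rdi *m B^T = S.
Proof.
rewrite mul_row_block tr_row_mx mul_row_col !mulmx0 addr0 add0r.
by rewrite mulmxN mulNmx.
Qed.

Lemma Nop_block : Nop g B1 B2 R1 R2 P = Rd + g *: (B^T *m P *m B).
Proof.
rewrite tr_row_mx mul_col_mx mul_col_row scale_block_mx add_block_mx.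
rewrite /Nop /N1op /N2op /L12op; congr block_mx.
- by rewrite addrC.
- by rewrite add0r.
- by rewrite add0r linearZ /= !trmx_mul trmxK sP mulmxA.
- by rewrite addrC.
Qed.

Lemma Lop_row : Lop g A B1 B2 P = g *: (A^T *m P *m B).
Proof. by rewrite /Lop /L1op /L2op mul_mx_row scale_row_mx. Qed.

Hypotheses (uP : P \in unitmx) (uK : invmx P + g *: S \in unitmx).

Let uKB : invmx P + g *: (B *m Rdi *m B^T) \in unitmx.
Proof. by rewrite row_diag_inv_tr. Qed.

Let mulN_woodbury : Nop g B1 B2 R1 R2 P *m woodbury_inv g P B Rdi = 1%:M.
Proof. by rewrite Nop_block mulmx_woodbury_inv // mulmx_diag_inv. Qed.

Lemma Nop_unitmx : Nop g B1 B2 R1 R2 P \in unitmx.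
Proof. by case: (mulmx1_unit mulN_woodbury). Qed.

Lemma riccati_residualE :
  Mop g A Q P - Lop g A B1 B2 P *m invmx (Nop g B1 B2 R1 R2 P) *m (Lop g A B1 B2 P)^T
  = g *: (A^T *m invmx (invmx P + g *: S) *m A) - P + Q.
Proof.
have invN : invmx (Nop g B1 B2 R1 R2 P) = woodbury_inv g P B Rdi.
  by rewrite -[LHS]mulmx1 -mulN_woodbury mulmxA mulVmx ?mul1mx ?Nop_unitmx.
have LtE : (Lop g A B1 B2 P)^T = g *: (B^T *m P *m A).
  by rewrite Lop_row linearZ /= !trmx_mul trmxK sP mulmxA.
rewrite invN LtE Lop_row.
have -> : g *: (A^T *m P *m B) *m woodbury_inv g P B Rdi *m (g *: (B^T *m P *m A))
    = g *: (A^T *m (g *: (P *m (B *m woodbury_inv g P B Rdi *m B^T) *m P)) *m A).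
  by rewrite -!scalemxAl -!scalemxAr -!scalemxAl !mulmxA.
rewrite woodbury_quadratic // -row_diag_inv_tr /Mop mulmxBr mulmxBl scalerBr.
by rewrite opprB addrC !addrA subrK.
Qed.

End RiccatiResidual.

Lemma resolvent_fixed_point (R : numFieldType) (d : nat) (g : R) (A P S Po : 'M[R]_d) :
    P \in unitmx -> invmx P + g *: S \in unitmx ->
    Po = g *: (P *m (2%:R *: A - S *m Po)) ->
  g *: (invmx (invmx P + g *: S) *m A) = (1/2) *: Po.
Proof.
move=> uP uK hPo.
have KPo : (invmx P + g *: S) *m Po = (2%:R * g) *: A.
  rewrite mulmxDl {1}hPo -scalemxAr mulmxA mulVmx // mul1mx -scalemxAl.
  by rewrite scalerBr subrK scalerA mulrC.
have two_neq0 : (2%:R : R) != 0 by rewrite pnatr_eq0.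
rewrite -(mulKmx uK Po) KPo -scalemxAr scalerA mulrA mul1r.
by rewrite mulVf // mul1r.
Qed.

Theorem mainTheorem15 (R : realFieldType) (d : nat) (gamma : R)
  (A Abar B1 B1bar B2 B2bar Q R1 R1bar R2 R2bar Po : 'M[R]_d) :
  (0 < d)%N -> 0 < gamma < 1 ->
  symmx Q -> symmx R1 -> symmx R1bar -> symmx R2 -> symmx R2bar ->
  B1 \in unitmx -> B2 \in unitmx -> R1 \in unitmx -> R2 \in unitmx ->
  B1 + B1bar \in unitmx -> B2 + B2bar \in unitmx ->
  R1 + R1bar \in unitmx -> R2 + R2bar \in unitmx ->
  let Gamma1 := - (1/2 : R) *: (invmx R1 *m B1^T) in
  let Gamma2 := (1/2 : R) *: (invmx R2 *m B2^T) in
  Po = gamma *: ((A^T *m Po + 2%:R *: Q) *m (A + (B1 *m Gamma1 + B2 *m Gamma2) *m Po)) ->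
  let Pc := (1/2 : R) *: (A^T *m Po) + Q in
  A^T *m Po = Po^T *m A ->
  Pc \in unitmx ->
  invmx Pc + gamma *: (B1 *m invmx R1 *m B1^T - B2 *m invmx R2 *m B2^T) \in unitmx ->
  [/\ symmx Pc,
      Nop gamma B1 B2 R1 R2 Pc \in unitmx &
      0 = Mop gamma A Q Pc
          - Lop gamma A B1 B2 Pc *m invmx (Nop gamma B1 B2 R1 R2 Pc)
            *m (Lop gamma A B1 B2 Pc)^T].
Proof.
move=> _ _ sQ _ _ _ _ _ _ uR1 uR2 _ _ _ _ G1 G2 hPo Pc hsym uPc uK.
set S := _ - _ in uK.
have sPc : symmx Pc by rewrite /symmx /Pc linearD linearZ /= trmx_mul trmxK -hsym sQ.
have half2 : (2%:R : R) * (1/2) = 1 by rewrite mul1r mulfV // pnatr_eq0.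
have PoE : Po = gamma *: (Pc *m (2%:R *: A - S *m Po)).
  have PcE : A^T *m Po + 2%:R *: Q = 2%:R *: Pc by rewrite scalerDr scalerA half2 scale1r.
  have GE : B1 *m G1 + B2 *m G2 = - (1/2) *: S.
    by rewrite /G1 /G2 /S -!scalemxAr !mulmxA scalerBr !scaleNr opprK.
  rewrite {1}hPo PcE GE; congr (_ *: _).
  by rewrite -scalemxAl scalemxAr scalerDr -scalemxAl scalerA mulrN half2 scaleN1r.
split=> //; first exact: Nop_unitmx.
rewrite riccati_residualE // -mulmxA scalemxAr (resolvent_fixed_point uPc uK PoE).
by rewrite -scalemxAr /Pc opprD addrA subrr add0r addNr.
Qed.
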